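(* Let $(X,d)$ be a separable metric space, $T\colon X\to X$ a Borel measurable map, $(s_n)_{n\ge1}$ a steady scale sequence, and $\mu,\nu$ two $T$-invariant $T$-ergodic Borel probability measures on $X$. Assume $T$ is a local contraction mod $\nu$. Then $\phi(x,y)=\liminf_{n\to\infty}s_n\,d(T^nx,y)$ is $\mu\times\nu$-almost everywhere constant.
   Context: A scale sequence is a sequence of positive reals $s_n\to\infty$; it is steady if $s_{n+1}/s_n\to1$. The dilation gauge is $D_T(x)=\limsup_{y\to x} d(Ty,Tx)/d(y,x)$ if $x$ is a limit point of $X$ and $D_T(x)=0$ if $x$ is isolated; $T$ is a local contraction mod $\nu$ if $D_T\le1$ $\nu$-a.e. *)

From HB Require Import structures.
From mathcomp Require Import all_boot all_order all_algebra.
From mathcomp Require Import all_classical all_reals all_analysis.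
Set Implicit Arguments. Unset Strict Implicit. Unset Printing Implicit Defensive.
Import Order.TTheory GRing.Theory Num.Theory numFieldNormedType.Exports.
Local Open Scope classical_set_scope.
Local Open Scope ring_scope.

Definition is_metric (R : realType) (X : Type) (d : X -> X -> R) : Prop :=
  [/\ (forall x y, 0 <= d x y),
      (forall x y, d x y = 0 <-> x = y),
      (forall x y, d x y = d y x) &
      (forall x y z, d x z <= d x y + d y z)].

Definition metric_open (R : realType) (X : Type) (d : X -> X -> R) (U : set X) : Prop :=
  forall x, U x -> exists2 e : R, 0 < e & [set y | d x y < e] `<=` U.

Definition borel_of_metric (R : realType) dX (X : measurableType dX)
    (d : X -> X -> R) : Prop :=
  (@measurable dX X) = <<s metric_open d >>.

Definition separable_metric (R : realType) (X : Type) (d : X -> X -> R) : Prop :=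
  exists D : set X, countable D /\
    forall x (e : R), 0 < e -> exists2 y, D y & d x y < e.

Definition scale_sequence (R : realType) (s : nat -> R) : Prop :=
  (forall n, 0 < s n) /\ s @ \oo --> +oo.

Definition steady_scale_sequence (R : realType) (s : nat -> R) : Prop :=
  scale_sequence s /\ (s n.+1 / s n) @[n --> \oo] --> (1 : R).

Definition limit_point (R : realType) (X : Type) (d : X -> X -> R) (x : X) : Prop :=
  forall r : R, 0 < r -> exists y, 0 < d y x < r.

Definition dilation_gauge (R : realType) (X : Type) (d : X -> X -> R) (T : X -> X)
    (x : X) : \bar R :=
  if `[< limit_point d x >] then
    ereal_inf [set ereal_sup [set ((d (T y) (T x)) / d y x)%:E
                              | y in [set y | 0 < d y x < r]]
              | r in [set r : R | 0 < r]]
  else 0%E.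

Definition local_contraction_mod (R : realType) dX (X : measurableType dX)
    (d : X -> X -> R) (T : X -> X) (nu : {measure set X -> \bar R}) : Prop :=
  {ae nu, forall x, (dilation_gauge d T x <= 1)%E}.

Definition measure_invariant (R : realType) dX (X : measurableType dX) (T : X -> X)
    (mu : {measure set X -> \bar R}) : Prop :=
  forall A, measurable A -> mu (T @^-1` A) = mu A.

Definition measure_ergodic (R : realType) dX (X : measurableType dX) (T : X -> X)
    (mu : {measure set X -> \bar R}) : Prop :=
  forall A, measurable A -> T @^-1` A = A -> mu A = 0%E \/ mu A = 1%E.

Definition phi (R : realType) (X : Type) (d : X -> X -> R) (T : X -> X)
    (s : nat -> R) (x y : X) : \bar R :=
  limn_einf (fun n => (s n * d (iter n T x) y)%:E).

(* For fixed x, a local contraction at y gives phi(x, T y) <= phi(x, y), so the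
   section {y | phi(x, y) < q} is mapped into itself by T^-1 up to a nu-null
   set.  For an invariant probability such a subinvariant set A coincides, up
   to a null set, with the invariant set limsup_n T^-n A; ergodicity of nu thus
   gives it measure 0 or 1.  Steadiness of (s_n) gives phi(T x, y) <= phi(x, y),
   so x |-> nu {y | phi(x, y) < q} is subinvariant as well, and ergodicity of mu
   makes (mu x nu) {phi < q} equal to 0 or 1 for every q.  A measurable function
   whose sublevel sets all have measure 0 or 1 is a.e. constant.  Separability
   is what makes d, hence phi, measurable on X x X. *)

From HB Require Import structures.
From mathcomp Require Import all_boot all_order all_algebra.
From mathcomp Require Import all_classical all_reals all_analysis.
From mathcomp Require Import measurable_realfun lra.
Import Order.TTheory GRing.Theory Num.Theory numFieldNormedType.Exports.

Set Implicit Arguments.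
Unset Strict Implicit.
Unset Printing Implicit Defensive.

Local Open Scope classical_set_scope.
Local Open Scope ring_scope.

Section limn_einf_facts.
Context {R : realType}.
Implicit Types (u : (\bar R)^nat) (a b : nat -> R).
Local Open Scope ereal_scope.

Lemma limn_einfE u : limn_einf u = ereal_sup (range (einfs u)).
Proof. by rewrite limn_einf_lim; apply/cvg_lim => //; exact: cvg_einfs_sup. Qed.

Lemma einfs_le_limn_einf u n : einfs u n <= limn_einf u.
Proof. by rewrite limn_einfE; apply: ereal_sup_ubound; exists n. Qed.

Lemma limn_einf_ge0 u : (forall n, 0 <= u n) -> 0 <= limn_einf u.
Proof.
move=> u0; apply: le_trans (einfs_le_limn_einf u 0).
by apply: le_ereal_inf_tmp => _ [n _ <-].
Qed.

Lemma limn_einf_lt_infinitely u M :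
  limn_einf u < M -> forall N, exists2 n, (N <= n)%N & u n < M.
Proof.
move=> uM N; apply: contrapT => nu_lt.
suff : M <= einfs u N by rewrite leNgt (le_lt_trans (einfs_le_limn_einf u N)).
apply: le_ereal_inf_tmp => _ [n /= Nn <-].
by rewrite leNgt; apply/negP => unM; apply: nu_lt; exists n.
Qed.

Lemma limn_einf_le_infinitely u L :
  (forall M : R, L < M%:E -> forall N, exists2 n, (N <= n)%N & u n <= M%:E) ->
  limn_einf u <= L.
Proof.
move=> uL; rewrite limn_einfE; apply: ge_ereal_sup => _ [N _ <-].
have einfs_le M : L < M%:E -> einfs u N <= M%:E.
  move=> LM; have [n Nn unM] := uL M LM N.
  by apply: le_trans unM; apply: ereal_inf_lbound; exists n.
case: L {uL} einfs_le => [l| |] einfs_le.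
- apply/lee_addgt0Pr => e e0.
  by rewrite -EFinD einfs_le // lte_fin ltrDl.
- by rewrite leey.
- by rewrite (eq_ninfty (fun M => einfs_le M (ltNyr M))).
Qed.

Lemma limn_einf_le_rescaled a b (f : nat -> nat) :
  (forall n, (0 <= a n)%R) ->
  (forall N, \forall n \near \oo, (N <= f n)%N) ->
  (forall rho K : R, (1 < rho)%R ->
     \forall n \near \oo, (a n < K -> b (f n) <= rho * a n)%R) ->
  limn_einf (fun n => (b n)%:E) <= limn_einf (fun n => (a n)%:E).
Proof.
move=> a0 f_oo ba; apply: limn_einf_le_infinitely => M LM N.
set L := limn_einf (fun n => (a n)%:E) in LM *.
have L0 : 0 <= L by apply: limn_einf_ge0 => n; rewrite lee_fin.
have [t [t0 Lt tM]] : exists t : R, [/\ (0 < t)%R, L < t%:E & (t < M)%R].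
  case: L L0 LM => [l| |] //; rewrite lee_fin lte_fin => l0 lM.
  by exists ((l + M) / 2)%R; rewrite lte_fin; split; lra.
have rho_gt1 : (1 < M / t)%R by rewrite ltr_pdivlMr // mul1r.
have [N1 _ baN1] := ba _ t rho_gt1.
have [N2 _ fN2] := f_oo N.
have [n n_ge an_lt] := limn_einf_lt_infinitely Lt (maxn N1 N2).
rewrite geq_max in n_ge; case/andP: n_ge => N1n N2n.
exists (f n); first exact: fN2.
rewrite lte_fin in an_lt; rewrite lee_fin (le_trans (baN1 n N1n an_lt)) //.
by rewrite mulrAC ler_pdivrMr // ler_pM2l ?ltW // (lt_trans t0).
Qed.

End limn_einf_facts.

Lemma measurable_fun_iter dX (X : measurableType dX) (T : X -> X) n :
  measurable_fun setT T -> measurable_fun setT (iter n T).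
Proof.
move=> mT; elim: n => [|n IH] /=; first exact: measurable_id.
exact: measurableT_comp mT IH.
Qed.

Lemma preimage_lim_sup_set_iter (X : Type) (T : X -> X) (A : set X) :
  T @^-1` lim_sup_set (fun n => iter n T @^-1` A) =
  lim_sup_set (fun n => iter n T @^-1` A).
Proof.
apply/seteqP; split => x ioA m _.
- have [k mk Ak] := ioA m I.
  by exists k.+1; [exact: leqW | rewrite /preimage /= -iterS iterSr].
- have [[|k] mk Ak] := ioA m.+1 I; first by [].
  by exists k; [exact: mk | rewrite /preimage /= -iterSr].
Qed.

Lemma measure_setU_null dX (X : measurableType dX) (R : realType)
    (mu : {measure set X -> \bar R}) (A B Z : set X) :
  measurable A -> measurable B -> measurable Z -> mu Z = 0%E ->
  A `|` Z = B `|` Z -> mu A = mu B.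
Proof. by move=> mA mB mZ Z0 ABZ; rewrite -(measureU0 mA mZ Z0) ABZ measureU0. Qed.

Section subinvariant_sets.
Context {R : realType} {dX : measure_display} {X : measurableType dX}.
Variables (T : X -> X) (nu : probability X R).
Hypotheses (mT : measurable_fun setT T) (nuT : measure_invariant T nu)
  (nu_erg : measure_ergodic T nu).
Local Open Scope ereal_scope.

Let measurable_preimage_iter n A :
  measurable A -> measurable (iter n T @^-1` A).
Proof.
by move=> mA; rewrite -[_ @^-1` _]setTI; exact: measurable_fun_iter.
Qed.

Let measure_preimage_iter n A :
  measurable A -> nu (iter n T @^-1` A) = nu A.
Proof.
elim: n A => [//|n IH] A mA.
have -> : iter n.+1 T @^-1` A = iter n T @^-1` (T @^-1` A) by [].
by rewrite IH ?nuT //; exact: (measurable_preimage_iter 1).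
Qed.

Lemma measure_invariant_setD_preimage A :
  measurable A -> nu (A `\` T @^-1` A) = 0 -> nu (T @^-1` A `\` A) = 0.
Proof.
move=> mA D0; have mTA : measurable (T @^-1` A) := measurable_preimage_iter 1 mA.
have finI : nu (T @^-1` A `&` A) \is a fin_num.
  by rewrite ge0_fin_numE // (le_lt_trans (probability_le1 _ _)) ?ltry //;
     exact: measurableI.
have nuA : nu A = nu (A `\` T @^-1` A) + nu (A `&` T @^-1` A) :=
  measureDI nu mA mTA.
have nuTA : nu A = nu (T @^-1` A `\` A) + nu (T @^-1` A `&` A) :=
  etrans (esym (nuT mA)) (measureDI nu mTA mA).
rewrite nuA D0 add0e setIC in nuTA.
have := congr1 (fun x => x - nu (T @^-1` A `&` A)) nuTA.
by rewrite /= subee // addeK.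
Qed.

Lemma subinvariant_zero_one A N :
  measurable A -> measurable N -> nu N = 0 -> A `<=` T @^-1` A `|` N ->
  nu A = 0 \/ nu A = 1.
Proof.
move=> mA mN N0 ATN.
pose B := lim_sup_set (fun n => iter n T @^-1` A).
pose Z := \bigcup_k iter k T @^-1` ((A `\` T @^-1` A) `|` (T @^-1` A `\` A)).
have mTA : measurable (T @^-1` A) := measurable_preimage_iter 1 mA.
have mD : measurable ((A `\` T @^-1` A) `|` (T @^-1` A `\` A)).
  by apply: measurableU; exact: measurableD.
have mB : measurable B.
  apply: bigcap_measurable => // m _.
  by apply: bigcup_measurable => n _; exact: measurable_preimage_iter.
have mZ : measurable Z by apply: bigcupT_measurable => k; exact: measurable_preimage_iter.
have D0 : nu (A `\` T @^-1` A) = 0.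
  apply/eqP; rewrite -measure_le0 -N0 le_measure ?inE //; first exact: measurableD.
  by move=> x [/ATN[]].
have Z0 : nu Z = 0.
  apply/(measure_negligible mZ)/negligible_bigcup => k.
  apply/negligibleP; first exact: measurable_preimage_iter.
  apply: (etrans (measure_preimage_iter k mD)).
  have TA0 := measure_invariant_setD_preimage mA D0.
  by apply: (etrans (measureU0 _ _ TA0) D0); exact: measurableD.
(* Off Z, membership in A is constant along orbits, so A agrees with the
   invariant set B of points visiting A infinitely often. *)
have orbit_A x : ~ Z x -> forall k, A (iter k T x) <-> A x.
  move=> Zx; elim=> [//|k IH]; rewrite -IH /=.
  by split=> Ax; apply: contrapT => Ax'; apply: Zx; exists k => //; [right | left].
have -> : nu A = nu B.
  apply: (measure_setU_null mA mB mZ Z0); apply/seteqP; split => x;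
    have [Zx|Zx] := pselect (Z x); do ?by right.
  - move=> [Ax|//]; left => m _; exists m => //=.
    by rewrite /preimage orbit_A.
  - move=> [Bx|//]; left; have [j _ Aj] := Bx 0%N I.
    by rewrite -(orbit_A x Zx j).
apply: nu_erg => //; exact: preimage_lim_sup_set_iter.
Qed.

End subinvariant_sets.

Section metric_measurability.
Context {R : realType} {dX : measure_display} {X : measurableType dX}.
Variable d : X -> X -> R.
Hypotheses (d_metric : is_metric d) (d_borel : borel_of_metric d).

Lemma metric_open_ball z (a : R) : metric_open d [set x | d x z < a].
Proof.
have [_ _ dC dT] := d_metric.
move=> x /= xa; exists (a - d x z); first by rewrite subr_gt0.
by move=> y /= xy; apply: le_lt_trans (dT y x z) _; rewrite dC -ltrBrDr.
Qed.

Lemma measurable_ball z (a : R) : measurable [set x | d x z < a].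
Proof. by rewrite d_borel; apply: sub_sigma_algebra; exact: metric_open_ball. Qed.

Lemma measurable_fun_dist :
  separable_metric d -> measurable_fun setT (fun p : X * X => d p.1 p.2).
Proof.
move=> [D [cD D_dense]]; have [_ _ dC dT] := d_metric.
pose U := {z : X | D z}.
have cU : countable [set: U].
  move/countable_injP: cD => [f finj]; apply/countable_injP.
  exists (fun u => f (sval u)) => -[u Du] [v Dv] _ _ /= fuv.
  have uv : u = v by apply: finj; rewrite ?inE.
  by subst v; congr exist; exact: Prop_irrelevance.
apply: (measurability _ (RGenInftyO.measurableE R)) => //.
move=> _ [_ [a ->] <-]; rewrite setTI.
have -> : (fun p : X * X => d p.1 p.2) @^-1` `]-oo, a[ =
    \bigcup_(u : U) \bigcup_(r : rat)
      ([set x | d x (sval u) < ratr r] `*` [set y | d y (sval u) < a - ratr r]).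
  apply/seteqP; split => -[x y] /=; rewrite in_itv /=.
  - move=> xya; pose e := (a - d x y) / 3.
    have e0 : 0 < e by rewrite /e divr_gt0 // subr_gt0.
    have [z Dz xz] := D_dense x e e0.
    have /rat_in_itvoo[r] : d x z < e by [].
    rewrite in_itv /= => /andP[xzr re].
    exists (exist _ z Dz) => //; exists r => //; split => //=.
    have := dT y x z; rewrite (dC y x) /e in xz re *; lra.
  - move=> [[z Dz] _ [r _ /= [xzr yzr]]].
    have := dT x z y; rewrite (dC z y); lra.
apply: countable_bigcupT_measurable => // u.
apply: bigcupT_measurable_rat => r.
by apply: measurableX; exact: measurable_ball.
Qed.

End metric_measurability.

Lemma measurable_fun_phi (R : realType) dX (X : measurableType dX)
    (d : X -> X -> R) (T : X -> X) (s : nat -> R) :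
  is_metric d -> separable_metric d -> borel_of_metric d ->
  measurable_fun setT T -> measurable_fun setT (fun p : X * X => phi d T s p.1 p.2).
Proof.
move=> d_metric d_sep d_borel mT.
have md := measurable_fun_dist d_metric d_borel d_sep.
apply: measurableT_comp => //; apply: measurable_fun_limn_esup => n /=.
have mdn : measurable_fun setT (fun p : X * X => d (iter n T p.1) p.2).
  apply: measurableT_comp md (measurable_fun_pair _ measurable_snd).
  exact: measurableT_comp (measurable_fun_iter n mT) measurable_fst.
rewrite (_ : (fun _ => _) = EFin \o (fun p => - (s n * d (iter n T p.1) p.2))).
  by apply/measurable_EFinP; apply: measurable_funN; exact: measurable_funM.
by apply/funext => p; rewrite /= EFinN.
Qed.

Section phi_monotone.
Context {R : realType} {X : Type}.
Variables (d : X -> X -> R) (T : X -> X) (s : nat -> R).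
Hypotheses (d_metric : is_metric d) (s_steady : steady_scale_sequence s).

Lemma dilation_gauge_le1_lipschitz y (rho : R) :
  (dilation_gauge d T y <= 1)%E -> 1 < rho ->
  exists2 r : R, 0 < r & forall z, d z y < r -> d (T z) (T y) <= rho * d z y.
Proof.
move=> DTy rho_gt1; have [d0 dE _ _] := d_metric.
have dzy0 z : d z y = 0 -> d (T z) (T y) <= rho * d z y.
  by move=> /dE ->; rewrite (proj2 (dE y y) erefl) mulr0 (proj2 (dE _ _) erefl).
move: DTy; rewrite /dilation_gauge; case: asboolP => [y_lim|y_iso] DTy.
- have rho_gt1E : (1 < rho%:E)%E by rewrite lte_fin.
  have [_ [r r0 <-] sup_lt] := ereal_inf_lt (le_lt_trans DTy rho_gt1E).
  exists r => // z zr; have [/dzy0 //|dzy_gt0] := eqVneq (d z y) 0.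
  have {}dzy_gt0 : 0 < d z y by rewrite lt_neqAle eq_sym dzy_gt0 d0.
  rewrite -ler_pdivrMr //; apply/ltW; rewrite -lte_fin (le_lt_trans _ sup_lt) //.
  by apply: ereal_sup_ubound; exists z => //=; rewrite dzy_gt0.
- have [r /not_implyP [r0 no_pt]] : exists r : R, ~ (0 < r -> exists z, 0 < d z y < r).
    by apply/existsNP => y_lim; apply: y_iso => r; exact: y_lim.
  exists r => // z zr; apply: dzy0; apply/eqP; rewrite eq_le d0 andbT leNgt.
  by apply/negP => dzy_gt0; apply: no_pt; exists z; rewrite dzy_gt0.
Qed.

Let s_gt0 n : 0 < s n. Proof. by case: s_steady => -[]. Qed.

Let s_ratio : (s n.+1 / s n) @[n --> \oo] --> (1 : R).
Proof. by case: s_steady. Qed.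

Let d_ge0 x y : 0 <= d x y. Proof. by case: d_metric. Qed.

Let dist_scaled_ge0 x y n : 0 <= s n * d (iter n T x) y.
Proof. by rewrite mulr_ge0 ?d_ge0 ?ltW. Qed.

Lemma phi_Tx_le x y : (phi d T s (T x) y <= phi d T s x y)%E.
Proof.
rewrite /phi; apply: (limn_einf_le_rescaled (f := predn) (dist_scaled_ge0 x y)).
  by move=> N; exists N.+1 => // -[|n].
move=> rho K rho_gt1.
have inv_lt1 : rho^-1 < 1 by rewrite invf_lt1 // (lt_trans ltr01 rho_gt1).
have [N _ ratio_gt] := cvgr_gt _ s_ratio _ inv_lt1.
exists N.+1 => // -[|n] //= Nn _; rewrite -iterSr -iterS mulrA ler_wpM2r ?d_ge0 //.
have := ratio_gt n Nn; rewrite /= ltr_pdivlMr // => /ltW.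
by rewrite -ler_pdivrMl ?(lt_trans ltr01 rho_gt1) // mulrC.
Qed.

Lemma phi_Ty_le x y :
  (dilation_gauge d T y <= 1)%E -> (phi d T s x (T y) <= phi d T s x y)%E.
Proof.
move=> DTy; rewrite /phi.
apply: (limn_einf_le_rescaled (f := succn) (dist_scaled_ge0 x y)).
  by move=> N; exists N => // n /leqW.
move=> rho K rho_gt1.
have rho_gt0 : 0 < rho by rewrite (lt_trans ltr01 rho_gt1).
(* rho = sqrt rho * sqrt rho: one factor bounds the local dilation of T at y,
   the other the ratio s_(n+1) / s_n. *)
have sqrt_gt1 : 1 < Num.sqrt rho by rewrite -sqrtr1 ltr_sqrt.
have [r r0 lip] := dilation_gauge_le1_lipschitz DTy sqrt_gt1.
have [N1 _ s_big] := proj1 (cvgryPgt s) (proj2 (proj1 s_steady)) (K / r).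
have [N2 _ ratio_lt] := cvgr_lt _ s_ratio _ sqrt_gt1.
exists (maxn N1 N2) => // n /=; rewrite geq_max => /andP[N1n N2n] an_lt.
have dn_lt : d (iter n T x) y < r.
  rewrite -(ltr_pM2l (s_gt0 n)) (lt_trans an_lt) // -ltr_pdivrMr //.
  exact: s_big.
have sn1_le : s n.+1 <= Num.sqrt rho * s n.
  by rewrite -ler_pdivrMr // ltW // ratio_lt.
rewrite -[rho](sqr_sqrtr (ltW rho_gt0)) expr2.
apply: le_trans (ler_wpM2l (ltW (s_gt0 _)) (lip _ dn_lt)) _.
by rewrite -mulrACA ler_wpM2r // mulr_ge0 ?sqrtr_ge0 ?d_ge0.
Qed.

End phi_monotone.

Lemma negligible_bigcup_count dT (T : measurableType dT) (R : realType)
    (mu : {measure set T -> \bar R}) (I : countType) (F : I -> set T) :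
  (forall i, mu.-negligible (F i)) -> mu.-negligible (\bigcup_i F i).
Proof.
move=> F0; pose G n := if unpickle n is Some i then F i else set0.
apply: (@negligibleS _ _ _ _ (\bigcup_n G n)).
  by move=> t [i _ Fit]; exists (pickle i) => //; rewrite /G pickleK.
apply: negligible_bigcup => n; rewrite /G.
by case: unpickle => [i|]; [exact: F0 | exact: negligible_set0].
Qed.

Lemma ereal_rat_between (R : realType) (a b : \bar R) :
  (a < b)%E -> exists r : rat, (a < (ratr r)%:E < b)%E.
Proof.
case: a => [x| |]; case: b => [y| |] //= ab.
- rewrite lte_fin in ab; have /rat_in_itvoo[r] := ab.
  by rewrite in_itv /= => /andP[xr ry]; exists r; rewrite !lte_fin xr ry.
- have /rat_in_itvoo[r] : x < x + 1 by lra.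
  by rewrite in_itv /= => /andP[xr _]; exists r; rewrite lte_fin xr ltry.
- have /rat_in_itvoo[r] : y - 1 < y by lra.
  by rewrite in_itv /= => /andP[_ ry]; exists r; rewrite lte_fin ry ltNyr.
- by exists 0; rewrite ltNyr ltry.
Qed.

Lemma ae_eq_cst_of_zero_one dY (Y : measurableType dY) (R : realType)
    (P : probability Y R) (f : Y -> \bar R) :
  (forall q : R, measurable [set y | (f y < q%:E)%E]) ->
  (forall q : R, P [set y | (f y < q%:E)%E] = 0%E \/ P [set y | (f y < q%:E)%E] = 1%E) ->
  exists c, {ae P, forall y, f y = c}.
Proof.
move=> mE E01; pose E q := [set y | (f y < q%:E)%E].
pose c := ereal_inf [set q%:E | q in [set q : R | P (E q) = 1%E]].
exists c.
pose B (r : rat) := if P (E (ratr r)) == 0%E then E (ratr r) else ~` E (ratr r).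
have B0 r : P.-negligible (B r).
  rewrite /B; case: ifPn => [/eqP E0|E_neq0].
    by apply/negligibleP; [exact: mE | exact: E0].
  apply/negligibleP; first exact/measurableC/mE.
  have [E0|E1] := E01 (ratr r); first by rewrite E0 eqxx in E_neq0.
  by apply: (etrans (probability_setC _ (mE _))); rewrite E1 subee.
apply: negligibleS (negligible_bigcup_count B0) => y /= /eqP.
rewrite neq_lt => /orP[fy_lt|fy_gt].
- have [r /andP[fyr rc]] := ereal_rat_between fy_lt; exists r => //.
  suff E0 : P (E (ratr r)) = 0%E by rewrite /B E0 eqxx.
  have [//|E1] := E01 (ratr r).
  have : (c <= (ratr r)%:E)%E by apply: ereal_inf_lbound; exists (ratr r).
  by rewrite leNgt rc.
- have [r /andP[cr ryf]] := ereal_rat_between fy_gt; exists r => //.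
  have [_ [q Eq1 <-] qr] := ereal_inf_lt cr.
  have E1 : P (E (ratr r)) = 1%E.
    apply/eqP; rewrite eq_le probability_le1 //=.
    apply: (@le_trans _ _ (P (E q))); first by rewrite Eq1.
    apply: le_measure; rewrite ?inE; try exact: mE.
    - by move=> z /= /lt_trans; apply.
    - exact: mE.
  rewrite /B E1 eqe oner_eq0 /E /=.
  by apply/negP; rewrite -leNgt ltW.
Qed.

Lemma product_zero_one_of_sections (R : realType) dX (X : measurableType dX)
    (T : X -> X) (mu nu : probability X R) (E : set (X * X)) :
  measurable_fun setT T -> measure_invariant T mu -> measure_ergodic T mu ->
  measurable E ->
  (forall x, nu (xsection E x) = 0%E \/ nu (xsection E x) = 1%E) ->
  (forall x, (nu (xsection E x) <= nu (xsection E (T x)))%E) ->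
  (mu \x nu)%E E = 0%E \/ (mu \x nu)%E E = 1%E.
Proof.
move=> mT muT mu_erg mE sec01 sec_le.
pose S := [set x | nu (xsection E x) = 1%E].
have mS : measurable S.
  have msec : measurable_fun setT (fun x => nu (xsection E x)).
    exact: measurable_fun_xsection.
  by have := msec measurableT [set 1%E] (emeasurable_set1 _); rewrite setTI.
have secE : (fun x => nu (xsection E x)) = (fun x => (\1_S x)%:E).
  apply/funext => x; rewrite indicE.
  have [sec0|sec1] := sec01 x; last by rewrite sec1 mem_set.
  by rewrite sec0 memNset // /S /= sec0 => /eqP; rewrite eqe eq_sym oner_eq0.
have -> : (mu \x nu)%E E = mu S.
  by rewrite [LHS]/product_measure1 /= secE integral_indic // setIT.
apply: (subinvariant_zero_one mT muT mu_erg mS measurable0 (measure0 _)).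
move=> x Sx; left; have mTx := measurable_xsection (T x) mE.
by apply/eqP; rewrite /= eq_le probability_le1 //= -Sx sec_le.
Qed.

Section phi_sublevel_zero_one.
Context (R : realType) (dX : measure_display) (X : measurableType dX)
  (d : X -> X -> R) (T : X -> X) (s : nat -> R) (mu nu : probability X R).
Hypotheses (d_metric : is_metric d) (d_sep : separable_metric d)
  (d_borel : borel_of_metric d) (mT : measurable_fun setT T)
  (s_steady : steady_scale_sequence s)
  (muT : measure_invariant T mu) (mu_erg : measure_ergodic T mu)
  (nuT : measure_invariant T nu) (nu_erg : measure_ergodic T nu)
  (T_contr : local_contraction_mod d T nu).

Lemma measurable_phi_lt (q : R) :
  measurable [set p : X * X | (phi d T s p.1 p.2 < q%:E)%E].
Proof.
have := measurable_fun_phi s d_metric d_sep d_borel mT measurableT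
  (emeasurable_itv `]-oo, q%:E[).
by rewrite setTI; congr measurable; apply/seteqP; split => p /=; rewrite in_itv.
Qed.

Lemma phi_lt_zero_one (q : R) :
  let E := [set p : X * X | (phi d T s p.1 p.2 < q%:E)%E] in
  (mu \x nu)%E E = 0%E \/ (mu \x nu)%E E = 1%E.
Proof.
move=> E; have mE := measurable_phi_lt q.
have [N [mN N0 contrN]] := T_contr.
apply: (product_zero_one_of_sections mT muT mu_erg mE) => x.
- apply: (subinvariant_zero_one mT nuT nu_erg (measurable_xsection x mE) mN N0).
  move=> y; rewrite /xsection /= in_setE /= => phi_lt.
  have [Ny|Ny] := pselect (N y); [by right | left].
  have DTy : (dilation_gauge d T y <= 1)%E by apply: contrapT => /contrN.
  by rewrite /= in_setE /= (le_lt_trans (phi_Ty_le d_metric s_steady x DTy)).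
- apply: le_measure; rewrite ?inE; try exact: measurable_xsection _ mE.
  move=> y; rewrite /xsection /= !in_setE /= => phi_lt.
  exact: le_lt_trans (phi_Tx_le T d_metric s_steady _ _) phi_lt.
Qed.

End phi_sublevel_zero_one.

Theorem theorem6p5 (R : realType) (dX : measure_display) (X : measurableType dX)
    (d : X -> X -> R) (T : X -> X) (s : nat -> R)
    (mu nu : probability X R) :
  is_metric d -> separable_metric d -> borel_of_metric d ->
  measurable_fun setT T ->
  steady_scale_sequence s ->
  measure_invariant T mu -> measure_ergodic T mu ->
  measure_invariant T nu -> measure_ergodic T nu ->
  local_contraction_mod d T nu ->
  exists c : \bar R,
    {ae (mu \x nu)%E, forall z : X * X, phi d T s z.1 z.2 = c}.
Proof.
move=> d_metric d_sep d_borel mT s_steady muT mu_erg nuT nu_erg T_contr.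
apply: ae_eq_cst_of_zero_one => q.
- exact: measurable_phi_lt.
- exact: phi_lt_zero_one.
Qed.
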